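(* Assume the structural equation model below, a budget constraint with $\gamma_g^*\in\Gamma(\tau,b)$, and the no-measurement-error (NOME) assumption that $\beta_\Phi^*$ is known exactly. Let $\hat\beta_y=\widehat{\mathrm{Cov}}(Y,Z)$ be computed from $n$ i.i.d. samples of $P(X,Y,Z)$, and assume each $(\hat\beta_y)_i$ has finite variance so that $\sqrt n((\hat\beta_y)_i-(\beta_y^* )_i)/\mathrm{Se}_i\to\mathcal{N}(0,1)$ in distribution, with $\mathrm{Se}_i$ consistently estimated by a plug-in $\widehat{\mathrm{Se}}_i$. Fix $\alpha\in(0,1)$ and let $(\delta\beta_y)_i=z_{1-\alpha/(2d_Z)}\widehat{\mathrm{Se}}_i/\sqrt n$ be the half-width of the normal-approximation $(1-\alpha/d_Z)\times100\%$ confidence interval for $(\beta_y)_i$ centered at $(\hat\beta_y)_i$ ($z_p$ the standard normal $p$-quantile). For each maximal assignment $\tilde U$ let $\hat\Gamma_{\tilde U}=\{\gamma\in\mathbb{R}^{d_Z}:|\gamma_i|\le\tau_{\tilde U_i}+(\delta\beta_y)_i\ \forall i\}$ and $\hat\Gamma_\alpha=\bigcup_{\tilde U\in\Sigma_b^{(\max)}}\hat\Gamma_{\tilde U}$. With $$\hat{\mathcal{T}}_\alpha=\{\theta\in\mathbb{R}^{d_\Phi}:\hat\beta_y-\theta\cdot\beta_\Phi^*\in\hat\Gamma_\alpha\},$$ we have, as $n\to\infty$, $P(\theta^*\in\hat{\mathcal{T}}_\alpha)\ge 1-\alpha$ asymptotically.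
   Context: Model: $Z:=f_z(\epsilon_z)$, $X:=f_x(Z,\epsilon_x)$, $Y:=\theta^*\cdot\Phi(X)+g_y(Z,\epsilon_y)$, $Z\in\mathbb{R}^{d_Z}$, known $\Phi:\Omega_X\to\mathbb{R}^{d_\Phi}$, $d_\Phi\le d_Z$. $\beta_\Phi^*=\mathrm{Cov}(\Phi(X),Z)$ ($d_\Phi\times d_Z$, columns $(\beta_\Phi^* )_i$), $\beta_y^*=\mathrm{Cov}(Y,Z)$, $\gamma_g^*=\mathrm{Cov}(g_y(Z,\epsilon_y),Z)=\beta_y^*-\theta^*\cdot\beta_\Phi^*$, with $\theta\cdot\beta_\Phi$ the vector of components $\theta\cdot(\beta_\Phi)_i$. Budget constraints: thresholds $0\le\tau_1<\dots<\tau_K<\infty$ and integer budgets $0<b_1<\dots<b_K\le d_Z$, $K\le d_Z$. $\Gamma(\tau,b)=\{\gamma\in\mathbb{R}^{d_Z}:\ \#\{i:|\gamma_i|\le\tau_\ell\}\ge b_\ell\text{ for all }\ell\in[K]\}$. Set $b_0=0$, $b_{K+1}=d_Z$, $\tau_{K+1}=+\infty$. The set $\Sigma_b^{(\max)}$ of maximal assignments consists of all $\tilde U\in\{1,\dots,K+1\}^{d_Z}$ having exactly $b_\ell-b_{\ell-1}$ components equal to $\ell$ for each $\ell\in\{1,\dots,K+1\}$; for such $\tilde U$, $\tau_{\tilde U_i}$ denotes the threshold indexed by $\tilde U_i$. Then $\Gamma(\tau,b)=\bigcup_{\tilde U\in\Sigma_b^{(\max)}}\{\gamma:|\gamma_i|\le\tau_{\tilde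 U_i}\ \forall i\}$. *)

From HB Require Import structures.
From mathcomp Require Import all_boot all_order all_algebra.
From mathcomp Require Import all_classical all_reals all_analysis.
Unset Strict Implicit.
Unset Printing Implicit Defensive.
Import Order.TTheory GRing.Theory Num.Theory.
Import numFieldNormedType.Exports.
Local Open Scope classical_set_scope.
Local Open Scope ring_scope.

Definition std_normal_cdf {R : realType} (x : R) : R :=
  fine (normal_prob 0 1 `]-oo, x]).

(* Budget parameters: thresholds tau_1..tau_K and budgets b_1..b_K are
   given as functions on nat; only the indices 1..K are meaningful. *)

Definition tau_ext {R : realType} (K : nat) (tau : nat -> R) (l : nat) : \bar R :=
  if (l <= K)%N then (tau l)%:E else +oo%E.

Definition b_ext (dZ K : nat) (b : nat -> nat) (l : nat) : nat :=
  if l == 0%N then 0%N else if (l <= K)%N then b l else dZ.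

Definition Gamma_budget {R : realType} (dZ K : nat) (tau : nat -> R)
    (b : nat -> nat) : set 'rV[R]_dZ :=
  [set g : 'rV[R]_dZ | forall l : nat, (1 <= l <= K)%N ->
     (b l <= #|[set i : 'I_dZ | (`|g ord0 i| <= tau l)%R]|)%N].

Definition max_assignments (dZ K : nat) (b : nat -> nat) : set ('I_dZ -> nat) :=
  [set U : 'I_dZ -> nat | (forall i, 1 <= U i <= K.+1)%N /\
           (forall l : nat, (1 <= l <= K.+1)%N ->
              #|[set i : 'I_dZ | U i == l]| = (b_ext dZ K b l - b_ext dZ K b l.-1)%N)].

Definition Gamma_hat_U {R : realType} (dZ K : nat) (tau : nat -> R)
    (delta : 'I_dZ -> R) (U : 'I_dZ -> nat) : set 'rV[R]_dZ :=
  [set g : 'rV[R]_dZ | forall i : 'I_dZ,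
     (`|g ord0 i|%:E <= tau_ext K tau (U i) + (delta i)%:E)%E].

Definition Gamma_hat {R : realType} (dZ K : nat) (tau : nat -> R) (b : nat -> nat)
    (delta : 'I_dZ -> R) : set 'rV[R]_dZ :=
  \bigcup_(U in max_assignments dZ K b) Gamma_hat_U dZ K tau delta U.

Definition T_hat {R : realType} (dZ dPhi K : nat) (tau : nat -> R) (b : nat -> nat)
    (delta : 'I_dZ -> R) (betay_hat : 'rV[R]_dZ) (betaPhi : 'M[R]_(dPhi, dZ))
    : set 'rV[R]_dPhi :=
  [set th : 'rV[R]_dPhi | betay_hat - th *m betaPhi \in Gamma_hat dZ K tau b delta].

(* Since gamma* = beta_y* - theta*.beta_Phi* satisfies the budget constraint, sorting
   its coordinates by absolute value and cutting the ranks at b_1 < ... < b_K gives a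
   maximal assignment U with |gamma*_i| <= tau_(U_i).  If every interval
   hat beta_y,i -+ delta_i covers beta*_y,i, the triangle inequality puts
   hat beta_y - theta*.beta_Phi* in hat Gamma_U, so theta* lies in hat T_alpha.
   Asymptotic normality, with the plug-in standard error absorbed by shrinking the
   quantile slightly, bounds each miss probability by 2 (1 - Phi z) + o(1) = alpha/d_Z + o(1),
   and the union bound over the d_Z coordinates yields coverage 1 - alpha - o(1). *)

From HB Require Import structures.
From mathcomp Require Import all_boot all_order all_algebra.
From mathcomp Require Import all_classical all_reals all_analysis.
From mathcomp Require Import measurable_realfun.
From mathcomp Require Import ring lra zify.
Import Order.TTheory GRing.Theory Num.Theory.
Import numFieldNormedType.Exports.
Local Open Scope classical_set_scope.
Local Open Scope ring_scope.

Section StdNormal.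
Context {R : realType}.
Local Notation N := (@normal_prob R 0 1).
Local Notation Phi := (@std_normal_cdf R).

Lemma normal_prob_le_peak (A : set R) : measurable A ->
  (N A <= (normal_peak 1)%:E * lebesgue_measure A)%E.
Proof.
move=> mA; rewrite -integral_cst //; apply: ge0_le_integral => //.
- by move=> x _; rewrite lee_fin normal_pdf_ge0.
- apply/measurable_EFinP; exact: measurable_funS (measurable_normal_pdf 0 1).
- by move=> x _; rewrite lee_fin normal_pdf_ub ?oner_neq0.
Qed.

Lemma normal_prob_set1 (x : R) : N [set x] = 0%E.
Proof.
apply/eqP; rewrite eq_le measure_ge0 andbT.
by have := @normal_prob_le_peak [set x] (measurable_set1 x); rewrite lebesgue_measure_set1 mule0.
Qed.

Lemma normal_probNy_reflect (x : R) : N `]-oo, - x] = N `[x, +oo[.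
Proof.
rewrite /normal_prob ge0_integration_by_substitutionNy.
- by apply: eq_integral => t _; rewrite /normal_pdf /= oner_eq0 /normal_fun !subr0 sqrrN.
- apply: continuous_subspaceT => t; apply: continuous_normal_pdf; exact: oner_neq0.
- by move=> t _; exact: normal_pdf_ge0.
Qed.

Lemma std_normal_cdfE (x : R) : (Phi x)%:E = N `]-oo, x].
Proof. by rewrite fineK // fin_num_measure. Qed.

Lemma std_normal_cdf_split (x y : R) : x <= y ->
  (Phi y)%:E = ((Phi x)%:E + N `]x, y])%E.
Proof.
move=> xy; rewrite !std_normal_cdfE.
rewrite (@itv_bndbnd_setU _ _ -oo%O (BRight x) (BRight y)) // measureU //.
apply/seteqP; split => t //=; rewrite !in_itv/= => -[xt /andP[tx _]].
by move: (lt_le_trans tx xt); rewrite ltxx.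
Qed.

Lemma std_normal_cdfN (x : R) : Phi (- x) = 1 - Phi x.
Proof.
have Nx : N `]-oo, x] = N `]-oo, x[.
  rewrite -(@setUitv1 _ _ -oo%O x true) // measureU //.
    by rewrite (_ : _ [set x] = 0%E) ?adde0 //; exact: normal_prob_set1.
  by rewrite -subset0 => t /= [+ tx]; rewrite !in_itv/= tx ltxx.
have : (N `]-oo, x[ + N `[x, +oo[)%E = 1%E.
  rewrite -measureU //; first (rewrite itv_setU_setT; exact: probability_setT).
  rewrite -subset0 => t /=; rewrite !in_itv/= andbT => -[tx xt].
  by move: (lt_le_trans tx xt); rewrite ltxx.
rewrite -Nx -normal_probNy_reflect -!std_normal_cdfE -EFinD => -[]; lra.
Qed.

Lemma std_normal_cdf_le (x y : R) : x <= y -> Phi x <= Phi y.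
Proof.
by move=> xy; rewrite -lee_fin (std_normal_cdf_split _ _ xy) leeDl.
Qed.

Lemma std_normal_cdf_lipschitz (x y : R) : x <= y ->
  Phi y - Phi x <= normal_peak 1 * (y - x).
Proof.
move=> xy; have := @normal_prob_le_peak `]x, y] (measurable_itv _).
rewrite lebesgue_measure_itv /= lte_fin.
have := std_normal_cdf_split _ _ xy; rewrite -(fineK (fin_num_measure _ _ _)) //.
move: (fine _) => r -[->].
case: ltgtP xy => // [xy _|-> _]; first by rewrite -EFinD -EFinM lee_fin; lra.
by rewrite mule0 lee_fin subrr mulr0; lra.
Qed.

Lemma std_normal_cdf_gt_half (x : R) : 2^-1 < Phi x -> 0 < x.
Proof.
have Phi0 : Phi 0 = 2^-1 by have := std_normal_cdfN 0; rewrite oppr0; lra.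
by move=> h; rewrite ltNge; apply/negP => /std_normal_cdf_le; lra.
Qed.
End StdNormal.

Section Rank.
Local Open Scope set_scope.
Local Open Scope nat_scope.
Context {disp : Order.disp_t} {T : orderType disp} {m : nat} (a : 'I_m -> T).

Lemma card_ord_lt (k : nat) : k <= m -> #|[set j : 'I_m | j < k]| = k.
Proof.
move=> km; have widen_inj : injective (widen_ord km) by move=> x y /(congr1 val) /= /val_inj.
rewrite -[RHS]card_ord -cardsT -(card_imset _ widen_inj).
apply: eq_card => j; rewrite inE; apply/idP/imsetP => [jk|[j' _ ->]]; last by rewrite /= ltn_ord.
by exists (Ordinal jk) => //; apply: val_inj.
Qed.

(* Ties in [a] are broken by the index, so [precedes] is a strict total order. *)
Definition precedes (x i : 'I_m) : bool := (a x < a i)%O || ((a x == a i) && (x < i)).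

Definition rank (i : 'I_m) : nat := #|[set x | precedes x i]|.

Lemma precedes_irr i : ~~ precedes i i.
Proof. by rewrite /precedes ltxx ltnn andbF. Qed.

Lemma precedes_trans x y i : precedes x y -> precedes y i -> precedes x i.
Proof.
rewrite /precedes => /orP[h1|/andP[/eqP e1 h1]] /orP[h2|/andP[/eqP e2 h2]].
- by rewrite (lt_trans h1 h2).
- by rewrite -e2 h1.
- by rewrite e1 h2.
- by rewrite e1 e2 eqxx (ltn_trans h1 h2) orbT.
Qed.

Lemma precedes_total x i : x != i -> precedes x i || precedes i x.
Proof.
move=> xi; rewrite /precedes; case: ltgtP => //= _.
by case: ltngtP => // /val_inj exi; rewrite exi eqxx in xi.
Qed.

Lemma rank_lt_precedes x i : precedes x i -> rank x < rank i.
Proof.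
move=> xi; apply: proper_card; apply/properP; split.
  by apply/fintype.subsetP => y; rewrite !inE => /precedes_trans; apply.
by exists x; rewrite !inE // (negbTE (precedes_irr x)).
Qed.

Lemma rank_inj : injective rank.
Proof.
move=> x i exi; apply/eqP/negPn/negP => /precedes_total /orP[] /rank_lt_precedes.
  by rewrite exi ltnn.
by rewrite exi ltnn.
Qed.

Lemma rank_lt i : rank i < m.
Proof.
rewrite -[m]card_ord -cardsT; apply: proper_card; apply/properP; split => //.
by exists i; rewrite !inE // (negbTE (precedes_irr i)).
Qed.

Lemma card_rank_lt k : k <= m -> #|[set i | rank i < k]| = k.
Proof.
move=> km; pose rk i := Ordinal (rank_lt i).
have rk_inj : injective rk by move=> x y /(congr1 val) /rank_inj.
rewrite -[RHS](card_ord_lt _ km) -[RHS](card_preimset _ rk_inj).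
by apply: eq_card => i; rewrite !inE.
Qed.

Lemma card_rank_itv lo hi : lo <= hi <= m -> #|[set i | lo <= rank i < hi]| = hi - lo.
Proof.
move=> /andP[lohi him].
have -> : [set i | lo <= rank i < hi] = [set i | rank i < hi] :\: [set i | rank i < lo].
  by apply/setP => i; rewrite !inE -leqNgt.
rewrite cardsD (finset.setIidPr _) ?card_rank_lt ?(leq_trans lohi) //.
by apply/fintype.subsetP => i; rewrite !inE => /leq_trans; apply.
Qed.

Lemma card_le_rank (t : T) (i : 'I_m) : (t < a i)%O -> #|[set x | (a x <= t)%O]| <= rank i.
Proof.
move=> ti; apply: subset_leq_card; apply/fintype.subsetP => x; rewrite !inE => xt.
by rewrite /precedes (le_lt_trans xt ti).
Qed.
End Rank.

Section Budgets.
Local Open Scope nat_scope.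
Variables (K : nat) (b : nat -> nat).
Hypothesis b_incr : forall l, 1 <= l < K -> b l < b l.+1.

Lemma budget_mono l l' : 1 <= l -> l <= l' <= K -> b l <= b l'.
Proof.
move=> l1; elim: l' => [|l' IH] /andP[ll' l'K]; first by lia.
move: ll'; rewrite leq_eqVlt => /orP[/eqP -> //|ll'].
by have := IH (introT andP (conj ll' (ltnW l'K))); have := b_incr l'; lia.
Qed.

Definition budgets_le (j : nat) : nat := \sum_(1 <= l < K.+1) (b l <= j : nat).

Lemma budgets_le_max j : budgets_le j <= K.
Proof.
apply: (@leq_trans (\sum_(1 <= l < K.+1) 1)); last by rewrite sum_nat_const_nat; lia.
by apply: leq_sum => l _; exact: leq_b1.
Qed.

Lemma leq_budgets_le l j : 1 <= l <= K -> (l <= budgets_le j) = (b l <= j).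
Proof.
move=> /andP[l1 lK]; rewrite /budgets_le (@big_cat_nat _ _ _ l.+1) //=.
have [blj|jbl] := leqP (b l) j.
  apply: leq_trans (leq_addr _ _).
  rewrite big_nat_cond (eq_bigr (fun=> 1)) -?big_nat_cond ?sum_nat_const_nat; first lia.
  move=> i /andP[/andP[i1 il] _]; rewrite (leq_trans _ blj) //.
  by apply: budget_mono; lia.
have -> : \sum_(l.+1 <= i < K.+1) (b i <= j : nat) = 0.
  rewrite big_nat_cond big1 // => i /andP[/andP[li iK] _].
  by rewrite leqNgt (leq_trans jbl) //; apply: budget_mono; lia.
rewrite (big_nat_recr _ _ _ l1) /= (leqNgt (b l)) jbl !addn0.
apply/negbTE; rewrite -ltnNge; apply: (@leq_ltn_trans (\sum_(1 <= i < l) 1)).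
  by apply: leq_sum => i _; exact: leq_b1.
by rewrite sum_nat_const_nat; lia.
Qed.
End Budgets.
Arguments budget_mono {K b}.
Arguments leq_budgets_le {K b}.

Lemma card_classical_set (T : finType) (p : pred T) :
  #|[set x : T | p x]%classic| = #|[set x | p x]%SET|.
Proof.
by apply: eq_card => x; rewrite inE; apply/idP/idP => [/set_mem|/mem_set].
Qed.

Section MaxAssignment.
Local Open Scope nat_scope.
Context {m K : nat} {b : nat -> nat}.
Hypotheses (K_gt0 : 0 < K) (b_incr : forall l, 1 <= l < K -> b l < b l.+1)
  (bK_le : b K <= m).

Lemma b_ext_mono l : 1 <= l <= K.+1 -> b_ext m K b l.-1 <= b_ext m K b l <= m.
Proof.
move=> /andP[l1 lK]; rewrite /b_ext (gtn_eqF l1).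
have b_le l' : 1 <= l' <= K -> b l' <= m.
  by move=> /andP[l'1 l'K]; apply: leq_trans bK_le; apply: (budget_mono b_incr); lia.
have [lK'|Kl] := leqP l K; last first.
  have -> : l = K.+1 by lia.
  by rewrite /= (gtn_eqF K_gt0) !leqnn bK_le.
rewrite b_le ?l1 // andbT; case: eqP => // /eqP l1'.
by rewrite (leq_trans (leq_pred l)) //; apply: (budget_mono b_incr); lia.
Qed.

Lemma leq_budgets_le_ext l j : j < m -> l <= K.+1 ->
  (l <= budgets_le K b j) = (b_ext m K b l <= j).
Proof.
move=> jm; rewrite /b_ext; case: l => [|l] lK //=.
have [lK'|Kl] := leqP l.+1 K; first by rewrite (leq_budgets_le b_incr) // lK'.
by have := budgets_le_max K b j; rewrite leqNgt; case: ltnP => //; lia.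
Qed.

Definition level_assignment {disp : Order.disp_t} {T : orderType disp}
    (a : 'I_m -> T) (i : 'I_m) : nat :=
  (budgets_le K b (rank a i)).+1.

Lemma level_assignmentE {disp : Order.disp_t} {T : orderType disp} (a : 'I_m -> T) i l :
  1 <= l <= K.+1 ->
  (level_assignment a i == l) =
  (b_ext m K b l.-1 <= rank a i < b_ext m K b l).
Proof.
move=> /andP[l1 lK]; have rm := rank_lt a i.
rewrite -(leq_budgets_le_ext l.-1 _ rm) ?ltnNge -?(leq_budgets_le_ext l _ rm) //; last lia.
rewrite /level_assignment.
by apply/eqP/andP => [<-|[]]; lia.
Qed.

Lemma level_assignment_max {disp : Order.disp_t} {T : orderType disp} (a : 'I_m -> T) :
  max_assignments m K b (level_assignment a).
Proof.
split=> [i|l lK]; first by rewrite /level_assignment /= ltnS budgets_le_max.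
rewrite card_classical_set -(card_rank_itv a) ?b_ext_mono //.
by apply: eq_card => i; rewrite !inE level_assignmentE.
Qed.

Lemma Gamma_budget_max_assignment {R : realType} {tau : nat -> R} {g : 'rV[R]_m} :
  Gamma_budget m K tau b g -> exists2 U, max_assignments m K b U &
    forall i, U i <= K -> (`|g ord0 i| <= tau (U i))%R.
Proof.
move=> gG; pose a (i : 'I_m) : R := `|g ord0 i|%R.
exists (level_assignment a) => [|i UK]; first exact: level_assignment_max.
set l := level_assignment a i in UK *.
have l1 : 0 < l by [].
rewrite leNgt; apply/negP => tau_lt.
have card_le : #|[set x | (`|g ord0 x| <= tau l)%R]%SET| <= rank a i :=
  card_le_rank a _ i tau_lt.
have := gG l (introT andP (conj l1 UK)); rewrite card_classical_set.
have := level_assignmentE a i l (introT andP (conj l1 (leqW UK))).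
by rewrite eqxx /b_ext (gtn_eqF l1) UK => /esym/andP[_]; lia.
Qed.
End MaxAssignment.

Lemma Gamma_hat_UE {R : realType} (m K : nat) (tau : nat -> R) (delta : 'I_m -> R)
    (U : 'I_m -> nat) (g : 'rV[R]_m) :
  Gamma_hat_U m K tau delta U g <->
  forall i, (U i <= K)%N -> `|g ord0 i| <= tau (U i) + delta i.
Proof.
split=> gU i; have := gU i; rewrite /tau_ext; case: leqP => UK //; first exact.
by rewrite addye ?leey.
Qed.

Lemma T_hat_of_coordinate_bounds {R : realType} {dZ dPhi K : nat} {tau : nat -> R}
    {b : nat -> nat} {delta bh : 'I_dZ -> R} {betay : 'rV[R]_dZ}
    {theta : 'rV[R]_dPhi} {betaPhi : 'M[R]_(dPhi, dZ)} {U : 'I_dZ -> nat} :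
  max_assignments dZ K b U ->
  (forall i, (U i <= K)%N -> `|(betay - theta *m betaPhi) ord0 i| <= tau (U i)) ->
  (forall i, `|bh i - betay ord0 i| <= delta i) ->
  theta \in T_hat dZ dPhi K tau b delta (\row_i bh i) betaPhi.
Proof.
move=> Umax gU bh_near; rewrite inE; apply/mem_set; exists U => //.
apply/Gamma_hat_UE => i UK; move: (gU i UK) (bh_near i); rewrite !mxE.
set c := \sum_j _ => gi bhi.
have -> : bh i - c = (betay ord0 i - c) + (bh i - betay ord0 i) by ring.
by rewrite (le_trans (ler_normD _ _)) ?lerD.
Qed.

Section Events.
Context {R : realType} {d : measure_display} {Omega : measurableType d}.

Lemma measurable_set_le (f g : Omega -> R) : measurable_fun setT f ->
  measurable_fun setT g -> measurable [set w | f w <= g w].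
Proof. by move=> mf mg; rewrite -[X in measurable X]setTI; exact: measurable_fun_le. Qed.

Lemma measurable_set_lt (f g : Omega -> R) : measurable_fun setT f ->
  measurable_fun setT g -> measurable [set w | f w < g w].
Proof.
move=> mf mg; have -> : [set w | f w < g w] = ~` [set w | g w <= f w].
  by apply/seteqP; split => w /=; rewrite ltNge => /negP.
exact/measurableC/measurable_set_le.
Qed.

(* The union over maximal assignments is indexed by finitely many finite functions. *)
Lemma measurable_T_hat_event (dZ dPhi K : nat) (tau : nat -> R) (b : nat -> nat)
    (delta bh : 'I_dZ -> Omega -> R) (theta : 'rV[R]_dPhi) (betaPhi : 'M[R]_(dPhi, dZ)) :
  (forall i, measurable_fun setT (delta i)) -> (forall i, measurable_fun setT (bh i)) ->
  measurable [set w | theta \in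
    T_hat dZ dPhi K tau b (fun i => delta i w) (\row_i bh i w) betaPhi].
Proof.
move=> mdelta mbh; set c := theta *m betaPhi.
pose E (l : nat) i := if (l <= K)%N
  then [set w | `|bh i w - c ord0 i| <= tau l + delta i w] else setT.
have -> : [set w | theta \in
    T_hat dZ dPhi K tau b (fun i => delta i w) (\row_i bh i w) betaPhi] =
  \bigcup_(u in [set u : {ffun 'I_dZ -> 'I_K.+2} | max_assignments dZ K b (fun i => u i)])
    \bigcap_(i in setT) E (u i : nat) i.
  have EE U w : (forall i, E (U i) i w) <->
      Gamma_hat_U dZ K tau (fun i => delta i w) U (\row_i bh i w - c).
    rewrite Gamma_hat_UE; split=> h i; have := h i; rewrite /E !mxE.
      by case: leqP => // _ + _.
    by case: leqP => // _ /(_ isT).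
  apply/seteqP; split => w /=.
    rewrite inE => /set_mem [U Umax /EE Uw].
    pose u : {ffun 'I_dZ -> 'I_K.+2} := [ffun i => inord (U i)].
    have uU : (fun i => u i : nat) = U.
      apply/funext => i; rewrite ffunE inordK // ltnS.
      by case: Umax => /(_ i) /andP[].
    by rewrite -uU in Umax Uw; exists u.
  move=> [u umax uw]; rewrite inE; apply/mem_set; exists (fun i => u i : nat) => //.
  by apply/EE => i; exact: uw.
apply: fin_bigcup_measurable; first exact: finite_finset.
move=> u _; apply: fin_bigcap_measurable; first exact: finite_finset.
move=> i _; rewrite /E; case: leqP => // _; apply: measurable_set_le.
  exact/measurableT_comp/measurable_funB.
exact: measurable_funD.
Qed.
End Events.

Section ProbabilityBounds.
Context {R : realType} {d : measure_display} {Omega : measurableType d}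
  (P : probability Omega R).
Local Open Scope ereal_scope.

Lemma probability_bigcup_le_sum {m : nat} {B : 'I_m -> set Omega} :
  (forall i, measurable (B i)) -> P (\bigcup_i B i) <= \sum_(i < m) P (B i).
Proof.
move=> mB; pose F k := if insub k is Some i then B i else set0.
have -> : \sum_(i < m) P (B i) = \sum_(i < m) P (F i).
  by apply: eq_bigr => i _; rewrite /F valK.
apply: (@content_subadditive _ _ _ P).
- by move=> k _; rewrite /F; case: insubP => //= i _ _; exact: mB.
- exact: fin_bigcup_measurable.
- by move=> w [i _ Bw]; rewrite -bigcup_mkord; exists (val i) => //=; rewrite /F valK.
Qed.

Lemma probability_bigcap_ge {m : nat} {A : 'I_m -> set Omega} {r : R} :
  (forall i, measurable (A i)) -> (forall i, P (~` A i) <= r%:E) ->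
  (1 - m%:R * r)%:E <= P (\bigcap_i A i).
Proof.
move=> mA Ar.
have mI : measurable (\bigcap_i A i) by exact: fin_bigcap_measurable.
have : P (~` \bigcap_i A i) <= (m%:R * r)%:E.
  rewrite setC_bigcap (le_trans (probability_bigcup_le_sum (fun i => measurableC (mA i)))) //.
  apply: (@le_trans _ _ (\sum_(i < m) r%:E)); first by apply: lee_sum => i _; exact: Ar.
  by rewrite sumEFin big_const_ord iter_addr addr0 mulr_natl.
rewrite probability_setC // -(fineK (fin_num_measure P _ mI)) -EFinB !lee_fin.
by move=> h; lra.
Qed.
End ProbabilityBounds.

Lemma ereal_cvg_near_le {R : realType} (u : nat -> \bar R) (l e : R) :
  u @ \oo --> l%:E -> 0 < e -> \forall n \near \oo, (u n <= (l + e)%:E)%E.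
Proof.
move=> /fine_cvgP[u_fin u_cvg] e0.
have := cvgr_le l u_cvg (l + e); rewrite ltrDl => /(_ _ e0) ule.
near=> n; have un_fin : u n \is a fin_num by near: n.
by rewrite -(fineK un_fin) lee_fin; near: n.
Unshelve. all: end_near.
Qed.

Lemma ereal_cvg_near_ge {R : realType} (u : nat -> \bar R) (l e : R) :
  u @ \oo --> l%:E -> 0 < e -> \forall n \near \oo, ((l - e)%:E <= u n)%E.
Proof.
move=> /fine_cvgP[u_fin u_cvg] e0.
have := cvgr_ge l u_cvg (l - e); rewrite ltrBlDr ltrDl => /(_ _ e0) uge.
near=> n; have un_fin : u n \is a fin_num by near: n.
by rewrite -(fineK un_fin) lee_fin; near: n.
Unshelve. all: end_near.
Qed.

Lemma studentized_within {R : realType} (sq s z eta X S : R) :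
  0 < sq -> 0 < s -> 0 < z ->
  - (z - eta) < sq * X / s <= z - eta -> `|S - s| <= s * eta / z ->
  `|X| <= z * S / sq.
Proof.
move=> sq0 s0 z0 /andP[]; rewrite ltr_pdivlMr // ler_pdivrMr // => lo hi.
rewrite ler_norml => /andP[Slo _].
have zS : (z - eta) * s <= z * S.
  have := ler_wpM2l (ltW z0) Slo.
  by rewrite mulrN mulrCA divff ?gt_eqF // mulr1 mulrBr mulrBl [s * eta]mulrC; lra.
rewrite ler_pdivlMr // -[sq in `|X| * sq](ger0_norm (ltW sq0)) -normrM mulrC.
by apply: le_trans zS; rewrite ler_norml; apply/andP; split; lra.
Qed.

Section StudentizedInterval.
Context {R : realType} {d : measure_display} {Omega : measurableType d}
  {P : probability Omega R}.
Variables (bh S : nat -> {RV P >-> R}) (beta s z : R).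
Hypotheses (s_gt0 : 0 < s) (z_gt0 : 0 < z).
Hypothesis bh_clt : forall x : R,
  P [set w | Num.sqrt n%:R * (bh n w - beta) / s <= x] @[n --> \oo]
    --> (std_normal_cdf x)%:E.
Hypothesis S_consistent : forall e : R, 0 < e ->
  P [set w | e < `|S n w - s|] @[n --> \oo] --> 0%E.

Definition studentized_covers (n : nat) : set Omega :=
  [set w | `|bh n w - beta| <= z * S n w / Num.sqrt n%:R].

Lemma measurable_studentized_covers n : measurable (studentized_covers n).
Proof.
apply: measurable_set_le; first exact/measurableT_comp/measurable_funB.
by apply: measurable_funM => //; exact: measurable_funM.
Qed.

Lemma studentized_miss_near (e : R) : 0 < e -> \forall n \near \oo,
  (P (~` studentized_covers n) <= (2 * (1 - std_normal_cdf z) + e)%:E)%E.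
Proof.
move=> e0; set del := e / 5; have del0 : 0 < del by rewrite divr_gt0.
set pk := normal_peak (1 : R); have pk0 : 0 <= pk := normal_peak_ge0 _.
set eta := del / (pk + 1); have eta0 : 0 < eta by rewrite divr_gt0 //; lra.
have Phi_eta : std_normal_cdf z - del <= std_normal_cdf (z - eta).
  have : pk * eta <= del by rewrite /eta mulrA ler_pdivrMr; nra.
  have zz : z - eta <= z by lra.
  by have := std_normal_cdf_lipschitz _ _ zz; rewrite -/pk; lra.
set e1 := s * eta / z; have e1_gt0 : 0 < e1 by rewrite divr_gt0 // mulr_gt0.
have near_hi := ereal_cvg_near_ge _ _ _ (bh_clt (z - eta)) del0.
have near_lo := ereal_cvg_near_le _ _ _ (bh_clt (- (z - eta))) del0.
have near_S := ereal_cvg_near_le _ _ _ (S_consistent _ e1_gt0) del0.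
near=> n.
have hi : ((std_normal_cdf (z - eta) - del)%:E <=
    P [set w | (Num.sqrt n%:R * (bh n w - beta) / s <= z - eta)%R])%E by near: n.
have lo : (P [set w | (Num.sqrt n%:R * (bh n w - beta) / s <= - (z - eta))%R] <=
    (std_normal_cdf (- (z - eta)) + del)%:E)%E by near: n.
have Cn : (P [set w | (e1 < `|S n w - s|)%R] <= (0 + del)%:E)%E by near: n.
pose T x := [set w | Num.sqrt n%:R * (bh n w - beta) / s <= x].
pose C := [set w | e1 < `|S n w - s|].
have mT x : measurable (T x).
  apply: measurable_set_le => //; apply: measurable_funM => //.
  exact/measurable_funM/measurable_funB.
have mC : measurable C by exact/measurable_set_lt/measurableT_comp/measurable_funB.
have miss_sub : ~` studentized_covers n `<=` (~` T (z - eta) `|` T (- (z - eta))) `|` C.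
  move=> w /= wmiss; apply: contra_notP wmiss => /not_orP[/not_orP[/contrapT w_hi w_lo] S_near].
  apply: (@studentized_within _ (Num.sqrt n%:R) s z eta); rewrite ?sqrtr_gt0 ?ltr0n //.
  - by near: n; exists 1%N.
  - by rewrite w_hi andbT ltNge; apply/negP.
  - by rewrite leNgt; apply/negP.
have P_miss : (P (~` studentized_covers n) <=
    P (~` T (z - eta)%R) + P (T (- (z - eta))%R) + P C)%E.
  apply: le_trans (le_measure _ _ _ miss_sub) _; rewrite ?inE.
  - exact/measurableC/measurable_studentized_covers.
  - by apply: measurableU => //; apply: measurableU => //; exact: measurableC.
  - apply: le_trans (measureU2 _ _ _) _ => //.
      by apply: measurableU => //; exact: measurableC.
    by apply: leeD2r; apply: measureU2 => //; exact: measurableC.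
rewrite (probability_setC _ (mT _)) in P_miss; rewrite std_normal_cdfN in lo.
move: P_miss hi lo Cn.
rewrite -(fineK (fin_num_measure P _ (mT (z - eta)))).
rewrite -(fineK (fin_num_measure P _ (mT (- (z - eta))))) -(fineK (fin_num_measure P _ mC)).
rewrite -(fineK (fin_num_measure P _ (measurableC (measurable_studentized_covers n)))).
have e_del : e = 5 * del by rewrite /del mulrC divfK ?pnatr_eq0.
by rewrite -EFinB -!EFinD !lee_fin; lra.
Unshelve. all: end_near.
Qed.
End StudentizedInterval.
Arguments studentized_miss_near {R d Omega P bh S beta s z}.
Theorem theorem4
  (R : realType) (dZ dPhi K : nat)
  (tau : nat -> R) (b : nat -> nat)
  (hK : (0 < K <= dZ)%N)
  (htau0 : 0 <= tau 1%N)
  (htau : forall l : nat, (1 <= l < K)%N -> tau l < tau l.+1)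
  (hb0 : (0 < b 1%N)%N)
  (hb : forall l : nat, (1 <= l < K)%N -> (b l < b l.+1)%N)
  (hbK : (b K <= dZ)%N)
  (hdPhi : (dPhi <= dZ)%N)
  (* NOME: [betaPhi] is the exact population matrix, not an estimate. *)
  (theta : 'rV[R]_dPhi) (betaPhi : 'M[R]_(dPhi, dZ)) (betay : 'rV[R]_dZ)
  (hgamma : Gamma_budget dZ K tau b (betay - theta *m betaPhi))
  (* [betay_hat n] and [Se_hat n] are the estimators computed from the first n samples. *)
  (d : measure_display) (Omega : measurableType d) (P : probability Omega R)
  (betay_hat : nat -> 'I_dZ -> ({RV P >-> R}))
  (Se : 'I_dZ -> R) (hSe : forall i, 0 < Se i)
  (Se_hat : nat -> 'I_dZ -> ({RV P >-> R}))
  (hclt : forall (i : 'I_dZ) (x : R),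
     P [set w | Num.sqrt (n%:R) * (betay_hat n i w - betay ord0 i) / Se i <= x]
       @[n --> \oo] --> (std_normal_cdf x)%:E)
  (hcons : forall (i : 'I_dZ) (eps : R), 0 < eps ->
     P [set w | eps < `|Se_hat n i w - Se i|] @[n --> \oo] --> 0%E)
  (alpha : R) (halpha : 0 < alpha < 1)
  (* z is the standard normal quantile z_(1 - alpha/(2 dZ)). *)
  (z : R) (hz : std_normal_cdf z = 1 - alpha / (2 * dZ%:R)) :
  (* liminf_n P(theta* in hat T_alpha) >= 1 - alpha *)
  forall eps : R, 0 < eps -> \forall n \near \oo,
    ((1 - alpha - eps)%:E <=
     P [set w | theta \in
        T_hat dZ dPhi K tau b (fun i => (z * Se_hat n i w / Num.sqrt (n%:R))%R)
              (\row_i betay_hat n i w)%R betaPhi])%E.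
Proof.
move=> eps eps_gt0; have /andP[K_gt0 KdZ] := hK.
have dZ_gt0 : (0 < dZ%:R :> R) by rewrite ltr0n (leq_trans K_gt0).
have [U Umax gU] := Gamma_budget_max_assignment K_gt0 hb hbK hgamma.
have z_gt0 : 0 < z.
  apply: std_normal_cdf_gt_half; rewrite hz.
  have dZ1 : 1 <= dZ%:R :> R by rewrite ler1n (leq_trans K_gt0).
  suff : alpha / (2 * dZ%:R) < 2^-1 by lra.
  by rewrite ltr_pdivrMr ?mulr_gt0 //; case/andP: halpha; lra.
pose covers i := studentized_covers (fun n => betay_hat n i) (fun n => Se_hat n i)
  (betay ord0 i) z.
have miss i := studentized_miss_near (hSe i) z_gt0 (hclt i) (hcons i) _
  (divr_gt0 eps_gt0 dZ_gt0).
near=> n.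
have mcovers i : measurable (covers i n) by exact: measurable_studentized_covers.
have miss_n : forall i, (P (~` covers i n) <=
    (2 * (1 - std_normal_cdf z) + eps / dZ%:R)%:E)%E.
  by near: n; apply: filter_forall => i; exact: miss.
apply: le_trans (le_trans (probability_bigcap_ge P mcovers miss_n) _).
  rewrite lee_fin hz.
  suff -> : dZ%:R * (2 * (1 - (1 - alpha / (2 * dZ%:R))) + eps / dZ%:R) = alpha + eps.
    by lra.
  by field; rewrite gt_eqF.
apply: le_measure; rewrite ?inE.
- exact: fin_bigcap_measurable.
- apply: measurable_T_hat_event => i //.
  by apply: measurable_funM => //; exact: measurable_funM.
- move=> w /= w_covers; apply: (T_hat_of_coordinate_bounds Umax gU) => i.
  exact: w_covers.
Unshelve. all: end_near.
Qed.
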